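(* Let $R$ be a ring and let $A=\sigma(R)\langle x_1,\dots,x_n\rangle$ be a skew PBW extension of $R$, with associated families $\Sigma=\{\sigma_1,\dots,\sigma_n\}$ and $\Delta=\{\delta_1,\dots,\delta_n\}$. If $R$ is a Baer ring, $R$ is $(\Sigma,\Delta)$-compatible, and $R$ satisfies condition (SA1), then $A$ has Property $(a.c.)$ on the right.
   Context: All rings are associative with identity. For $S\subseteq T$ (a ring $T$), $r_T(S)=\{a\in T: Sa=0\}$ and $\ell_T(S)=\{a\in T: aS=0\}$. A ring $A$ is a skew PBW extension of $R$, written $A=\sigma(R)\langle x_1,\dots,x_n\rangle$, if: (i) $R$ is a subring of $A$ with the same identity; (ii) there are elements $x_1,\dots,x_n\in A$ such that $A$ is a free left $R$-module with basis the standard monomials $x^\alpha=x_1^{\alpha_1}\cdots x_n^{\alpha_n}$, $\alpha\in\mathbb N^n$ (with $x^0=1$); (iii) for each $i$ and each nonzero $r\in R$ there is nonzero $c_{i,r}\in R$ with $x_ir-c_{i,r}x_i\in R$; (iv) for all $i,j$ there is nonzero $d_{i,j}\in R$ with $x_jx_i-d_{i,j}x_ix_j\in R+Rx_1+\cdots+Rx_n$. For such $A$ there are injective endomorphisms $\sigma_i$ of $R$ and $\sigma_i$-derivations $\delta_i$ of $R$ with $x_ir=\sigma_i(r)x_i+\delta_i(r)$ for all $r\in R$; $\Sigma=\{\sigma_1,\dots,\sigma_n\}$, $\Delta=\{\delta_1,\dots,\delta_n\}$. For $\alpha\in\mathbb N^n$, $\sigma^\alpha=\sigma_1^{\alpha_1}\circ\cdots\circ\sigma_n^{\alpha_n}$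 and $\delta^\alpha=\delta_1^{\alpha_1}\circ\cdots\circ\delta_n^{\alpha_n}$. $R$ is $\Sigma$-compatible if for all $a,b\in R$ and $\alpha\in\mathbb N^n$: $a\sigma^\alpha(b)=0$ iff $ab=0$; $R$ is $\Delta$-compatible if for all $a,b\in R$ and $\beta\in\mathbb N^n$: $ab=0$ implies $a\delta^\beta(b)=0$; $(\Sigma,\Delta)$-compatible means both. $R$ satisfies condition (SA1) if whenever $fg=0$ for $f=a_0+a_1X_1+\cdots+a_mX_m$ and $g=b_0+b_1Y_1+\cdots+b_tY_t$ in $A$ (with $a_i,b_j\in R$ and $X_i,Y_j$ standard monomials), then $a_ib_j=0$ for all $i,j$. $R$ is a Baer ring if for every nonempty subset $X\subseteq R$ there is an idempotent $e$ with $r_R(X)=eR$. A ring $T$ has Property $(a.c.)$ on the right if for every finitely generated right ideal $I$ of $T$ there is $c\in T$ with $r_T(I)=r_T(cT)$; on the left if for every finitely generated left ideal $I$ there is $c\in T$ with $\ell_T(I)=\ell_T(Tc)$. *)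

From HB Require Import structures.
From mathcomp Require Import all_boot all_algebra.
Set Implicit Arguments. Unset Strict Implicit. Unset Printing Implicit Defensive.
Import GRing.Theory.
Local Open Scope ring_scope.

Notation expo n := {ffun 'I_n -> nat}.

Definition monom (A : pzRingType) (n : nat) (x : 'I_n -> A) (alpha : expo n) : A :=
  \prod_(i < n) x i ^+ alpha i.

Definition lincomb (R A : pzRingType) (iota : R -> A) (n : nat) (x : 'I_n -> A)
  (s : seq (expo n)) (c : expo n -> R) : A :=
  \sum_(alpha <- s) iota (c alpha) * monom x alpha.

Definition skewPBW (R A : pzRingType) (iota : {rmorphism R -> A}) (n : nat)
  (x : 'I_n -> A) : Prop :=
  [/\ injective iota,
      (* (ii) A is a free left R-module with basis the standard monomials *)
      (forall a : A, exists (s : seq (expo n)) (c : expo n -> R), a = lincomb iota x s c),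
      (forall (s : seq (expo n)) (c : expo n -> R), uniq s ->
          lincomb iota x s c = 0 -> forall alpha, alpha \in s -> c alpha = 0),
      (forall (i : 'I_n) (r : R), r != 0 ->
          exists c : R, c != 0 /\ exists r' : R, x i * iota r - iota c * x i = iota r') &
      (forall i j : 'I_n, exists d : R, d != 0 /\
          exists (r0 : R) (r : 'I_n -> R),
            x j * x i - iota d * x i * x j = iota r0 + \sum_(k < n) iota (r k) * x k)].

Definition ring_endo (R : pzRingType) (f : R -> R) : Prop :=
  [/\ forall a b, f (a + b) = f a + f b,
      forall a b, f (a * b) = f a * f b & f 1 = 1].

Definition sigma_derivation (R : pzRingType) (s d : R -> R) : Prop :=
  (forall a b, d (a + b) = d a + d b) /\
  (forall a b, d (a * b) = s a * d b + d a * b).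

Definition assoc_families (R A : pzRingType) (iota : {rmorphism R -> A}) (n : nat)
  (x : 'I_n -> A) (sigma delta : 'I_n -> R -> R) : Prop :=
  forall i : 'I_n,
    [/\ ring_endo (sigma i), injective (sigma i),
        sigma_derivation (sigma i) (delta i) &
        forall r : R, x i * iota r = iota (sigma i r) * x i + iota (delta i r)].

Definition fpow (R : Type) (n : nat) (f : 'I_n -> R -> R) (alpha : expo n) : R -> R :=
  foldr (fun i g => iter (alpha i) (f i) \o g) id (enum 'I_n).

Definition Sigma_compatible (R : pzRingType) (n : nat) (sigma : 'I_n -> R -> R) : Prop :=
  forall (a b : R) (alpha : expo n), a * fpow sigma alpha b = 0 <-> a * b = 0.

Definition Delta_compatible (R : pzRingType) (n : nat) (delta : 'I_n -> R -> R) : Prop :=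
  forall (a b : R) (beta : expo n), a * b = 0 -> a * fpow delta beta b = 0.

Definition SA1 (R A : pzRingType) (iota : {rmorphism R -> A}) (n : nat)
  (x : 'I_n -> A) : Prop :=
  forall (s t : seq (expo n)) (a b : expo n -> R), uniq s -> uniq t ->
    lincomb iota x s a * lincomb iota x t b = 0 ->
    forall alpha beta, alpha \in s -> beta \in t -> a alpha * b beta = 0.

Definition rann (T : pzRingType) (S : T -> Prop) : T -> Prop :=
  fun a => forall y, S y -> y * a = 0.
Definition lann (T : pzRingType) (S : T -> Prop) : T -> Prop :=
  fun a => forall y, S y -> a * y = 0.

Definition baer (R : pzRingType) : Prop :=
  forall X : R -> Prop, (exists x, X x) ->
    exists e : R, e * e = e /\ forall a, rann X a <-> exists r, a = e * r.

Definition rideal_gen (T : pzRingType) (s : seq T) : T -> Prop :=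
  fun y => exists t : 'I_(size s) -> T, y = \sum_(i < size s) s`_i * t i.

Definition rprincipal (T : pzRingType) (c : T) : T -> Prop :=
  fun y => exists t, y = c * t.

Definition right_ac (T : pzRingType) : Prop :=
  forall s : seq T, exists c : T, forall a, rann (rideal_gen s) a <-> rann (rprincipal c) a.

From HB Require Import structures.
From mathcomp Require Import all_boot all_algebra.
Local Open Scope ring_scope.
Import GRing.Theory.

(* Let I be the right ideal generated by a finite set and C the set of all
   coefficients of elements of I.  Since R is Baer, r_R(C) = eR with e
   idempotent.  Compatibility gives a b = 0 => a x^alpha b = 0, so I e = 0.
   Conversely, if g annihilates I then (SA1) every coefficient of g lies in
   r_R(C) = eR, hence e g = g.  These two facts say exactly that r_A(I) is the
   right annihilator of the principal right ideal (1 - e)A. *)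

Set Implicit Arguments.

Section Annihilators.
Variable T : pzRingType.

Lemma rideal_gen0 (s : seq T) : rideal_gen s 0.
Proof. by exists (fun _ => 0); rewrite big1 // => i _; rewrite mulr0. Qed.

Lemma rideal_gen_mulr (s : seq T) y t : rideal_gen s y -> rideal_gen s (y * t).
Proof.
move=> [u ->]; exists (fun i => u i * t).
by rewrite mulr_suml; apply: eq_bigr => i _; rewrite mulrA.
Qed.

Lemma rann_rprincipal_subr (I : T -> Prop) (f : T) :
  (forall y t, I y -> I (y * t)) ->
  (forall y, I y -> y * f = 0) ->
  (forall g, rann I g -> f * g = g) ->
  forall a, rann I a <-> rann (rprincipal (1 - f)) a.
Proof.
move=> Imul If fI a; split.
- move=> Ia _ [t ->]; rewrite -mulrA mulrBl mul1r fI ?subrr // => y Iy.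
  by rewrite mulrA; apply/Ia/Imul.
- move=> Ha y Iy.
  have /eqP : (1 - f) * a = 0 by apply: Ha; exists 1; rewrite mulr1.
  by rewrite mulrBl mul1r subr_eq0 => /eqP ->; rewrite mulrA If ?mul0r.
Qed.

End Annihilators.

Definition unit_expo n (i : 'I_n) : expo n := [ffun j => nat_of_bool (j == i)].

Lemma fpow_unit_expo (R : Type) n (f : 'I_n -> R -> R) (i : 'I_n) :
  fpow f (unit_expo i) =1 f i.
Proof.
move=> b; rewrite /fpow.
have fpow_notin (r : seq 'I_n) : i \notin r ->
    foldr (fun j g => iter (unit_expo i j) (f j) \o g) id r b = b.
  elim: r => [|j r IHr] //=; rewrite inE negb_or => /andP[ne nr].
  by rewrite ffunE eq_sym (negbTE ne) /= IHr.
have : uniq (enum 'I_n) by apply: enum_uniq.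
have : i \in enum 'I_n by rewrite mem_enum.
elim: (enum 'I_n) => [|j r IHr] //=; rewrite inE => /orP[/eqP<-|ir] /andP[nr ur].
  by rewrite ffunE eqxx /= fpow_notin.
have ne : j != i by apply: contraNneq nr => ->.
by rewrite ffunE (negbTE ne) /= IHr.
Qed.

Section StandardForm.
Variables (R A : pzRingType) (iota : {rmorphism R -> A}) (n : nat) (x : 'I_n -> A).

Lemma lincomb_undup (s : seq (expo n)) (c : expo n -> R) :
  lincomb iota x s c = lincomb iota x (undup s) (fun al => c al *+ count_mem al s).
Proof.
rewrite /lincomb -big_undup_iterop_count; apply: eq_bigr => al _.
by rewrite Monoid.iteropE iter_addr_0 rmorphMn mulrnAl.
Qed.

Lemma skewPBW_uniq_lincomb : skewPBW iota x ->
  forall a, exists s c, uniq s /\ a = lincomb iota x s c.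
Proof.
move=> [_ Hspan _ _ _] a; have [s [c ->]] := Hspan a.
by exists (undup s), (fun al => c al *+ count_mem al s); rewrite undup_uniq lincomb_undup.
Qed.

Lemma mul_iota_lincomb e s c :
  iota e * lincomb iota x s c = lincomb iota x s (fun al => e * c al).
Proof. by rewrite /lincomb mulr_sumr; apply: eq_bigr => al _; rewrite mulrA rmorphM. Qed.

Lemma eq_lincomb s c c' : {in s, c =1 c'} -> lincomb iota x s c = lincomb iota x s c'.
Proof. by move=> cc'; apply: eq_big_seq => al /cc' ->. Qed.

Definition coef_set (I : A -> Prop) : R -> Prop :=
  fun r => exists y s c al,
    [/\ I y, uniq s, y = lincomb iota x s c, al \in s & r = c al].

Lemma coef_set_nonempty {I : A -> Prop} : I 0 -> exists r, coef_set I r.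
Proof.
move=> I0; exists 0, 0, [:: [ffun => 0%N]], (fun _ => 0), [ffun => 0%N].
by split; rewrite ?inE // /lincomb big_seq1 rmorph0 mul0r.
Qed.

Lemma SA1_rann_coef_set I g t b {be} : SA1 iota x -> rann I g ->
  uniq t -> g = lincomb iota x t b -> be \in t -> rann (coef_set I) (b be).
Proof.
move=> Hsa Ig ut gE bet _ [y [s [c [al [Iy us yE als ->]]]]].
by apply: (Hsa s t c b) => //; rewrite -yE -gE; apply: Ig.
Qed.

End StandardForm.

Section Compatibility.
Variables (R A : pzRingType) (iota : {rmorphism R -> A}) (n : nat) (x : 'I_n -> A).
Variables (sigma delta : 'I_n -> R -> R).
Hypothesis Hfam : assoc_families iota x sigma delta.
Hypothesis Hsig : Sigma_compatible sigma.
Hypothesis Hdel : Delta_compatible delta.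

Definition preserves_zero_products (m : A) :=
  forall a b, a * b = 0 -> iota a * m * iota b = 0.

Lemma preserves_zero_products1 : preserves_zero_products 1.
Proof. by move=> a b ab; rewrite mulr1 -rmorphM ab rmorph0. Qed.

Lemma preserves_zero_productsMx m i :
  preserves_zero_products m -> preserves_zero_products (m * x i).
Proof.
move=> Hm a b ab; have [_ _ _ xiota] := Hfam i.
have aS : a * sigma i b = 0.
  by have := proj2 (Hsig a b (unit_expo i)) ab; rewrite fpow_unit_expo.
have aD : a * delta i b = 0.
  by have := Hdel _ _ (unit_expo i) ab; rewrite fpow_unit_expo.
by rewrite -!mulrA xiota mulrDr mulrDr !mulrA (Hm _ _ aS) (Hm _ _ aD) mul0r add0r.
Qed.

Lemma preserves_zero_products_monom al : preserves_zero_products (monom x al).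
Proof.
rewrite /monom; elim/last_ind: (index_enum _) => [|r j IHr].
  by rewrite big_nil; apply: preserves_zero_products1.
rewrite big_rcons /=; move: (\big[_/_]_(_ <- r) _) IHr => m Hm.
elim: (al j) => [|k IHk]; first by rewrite expr0 mulr1.
by rewrite exprSr mulrA; apply: preserves_zero_productsMx.
Qed.

Lemma lincomb_mul_iota_eq0 s c e :
  (forall al, al \in s -> c al * e = 0) -> lincomb iota x s c * iota e = 0.
Proof.
move=> ce; rewrite /lincomb mulr_suml big1_seq // => al /andP[_ als].
exact/preserves_zero_products_monom/ce.
Qed.

End Compatibility.

Unset Implicit Arguments.

Theorem mainTheorem1 (R A : pzRingType) (iota : {rmorphism R -> A}) (n : nat)
  (x : 'I_n -> A) (sigma delta : 'I_n -> R -> R) :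
  skewPBW iota x ->
  assoc_families iota x sigma delta ->
  baer R ->
  Sigma_compatible sigma ->
  Delta_compatible delta ->
  SA1 iota x ->
  right_ac A.
Proof.
move=> HA Hfam Hbaer Hsig Hdel Hsa s.
pose I := rideal_gen s.
have [e [ee He]] := Hbaer _ (coef_set_nonempty iota x (@rideal_gen0 A s)).
have Ce : rann (coef_set iota x I) e by apply/He; exists 1; rewrite mulr1.
exists (1 - iota e); apply: rann_rprincipal_subr; first exact: rideal_gen_mulr.
- move=> y Iy; have [t [c [ut yE]]] := skewPBW_uniq_lincomb HA y.
  rewrite yE; apply: (lincomb_mul_iota_eq0 Hfam Hsig Hdel) => al alt.
  by apply: Ce; exists y, t, c, al.
- move=> g Ig; have [t [b [ut gE]]] := skewPBW_uniq_lincomb HA g.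
  rewrite gE mul_iota_lincomb; apply: eq_lincomb => be bet /=.
  have [r ->] := (He (b be)).1 (SA1_rann_coef_set Hsa Ig ut gE bet).
  by rewrite mulrA ee.
Qed.
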